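(* Let $\mathcal{M}=\{1,\dots,M\}$ be a set of satellites, $U\ge 1$ an integer, and $w_1,w_2\in[0,1]$ with $w_1+w_2\le 1$. For times $t=1,2,\dots$ let $\phi^*_{i,j,t}\in\{0,1\}$ (with $\phi^*_{i,j,0}\in\{0,1\}$ given) be link-selection variables satisfying $\phi^*_{i,j,t}=\phi^*_{j,i,t}$ and $\sum_{j=1}^M\phi^*_{i,j,t}\le U$ for all $i$. Let $\bar S_{i,j,t}\in[0,1]$ and $\bar L_{i,j,t}\in(0,1]$ be normalized capacity and latency, $\bar\phi_{i,j,t}=\phi^*_{i,j,t}/U$, and $$A_{i,j,t}=w_1\bar S_{i,j,t}+w_2(1-\bar L_{i,j,t})+(1-w_1-w_2)\bar\phi_{i,j,t-1}.$$ Define the score function by $\Pi_{i,0}=0$ for all $i$ and, for $t\ge 1$, $$\Pi_{i,t}=\frac{1}{U}\sum_{j\in\mathcal{M}\setminus\{i\}}\phi^*_{i,j,t}\big(A_{i,j,t}+\Pi_{j,t-1}\big).$$ Then the score function remains finite even as the observation time approaches infinity: $\Pi_{i,t}<\infty$ as $t\to\infty$, for every $i\in\mathcal{M}$.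
   Context: This score function arises in a topology design algorithm for LEO satellite networks, where each satellite $i$ selects at most $U$ other satellites to link with at each time step; $\phi^*_{i,j,t}=1$ means satellites $i$ and $j$ are linked at time $t$. The normalized capacity and latency are $\bar S_{i,j,t}=S_{i,j,t}/S_{\text{Max},t}$ and $\bar L_{i,j,t}=L_{i,j,t}/L_{\text{Max},t}$, where $S_{\text{Max},t},L_{\text{Max},t}$ are the running maxima of capacity and latency over feasible links up to time $t$. *)

From mathcomp Require Import all_boot all_order all_algebra.
Set Implicit Arguments. Unset Strict Implicit. Unset Printing Implicit Defensive.
Import Order.TTheory GRing.Theory Num.Theory.
Local Open Scope ring_scope.

(* Satellites are indexed by 'I_M (i.e. {1,...,M} shifted to {0,...,M-1}).
   phi i j t : bool is the link-selection variable phi*_{i,j,t} in {0,1}. *)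

Definition Aterm (R : realFieldType) (M U : nat) (w1 w2 : R)
    (phi : 'I_M -> 'I_M -> nat -> bool) (Sbar Lbar : 'I_M -> 'I_M -> nat -> R)
    (i j : 'I_M) (t : nat) : R :=
  w1 * Sbar i j t + w2 * (1 - Lbar i j t)
  + (1 - w1 - w2) * ((phi i j t.-1)%:R / U%:R).

Fixpoint Pi (R : realFieldType) (M U : nat) (w1 w2 : R)
    (phi : 'I_M -> 'I_M -> nat -> bool) (Sbar Lbar : 'I_M -> 'I_M -> nat -> R)
    (t : nat) (i : 'I_M) {struct t} : R :=
  match t with
  | 0 => 0
  | t'.+1 =>
      (U%:R)^-1 * \sum_(j < M | j != i)
        (phi i j t'.+1)%:R * (Aterm U w1 w2 phi Sbar Lbar i j t'.+1
                              + Pi U w1 w2 phi Sbar Lbar t' j)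
  end.

From mathcomp Require Import all_boot all_order all_algebra.
From mathcomp Require Import lra.
Import Order.TTheory GRing.Theory Num.Theory.
Local Open Scope ring_scope.

(* Each A_{i,j,t} is a convex combination of three numbers in [0, 1], hence lies
   in [0, 1].  Thus Pi_{i,t+1} is 1/U times a sum of at most U (the degree bound)
   terms A + Pi_{j,t} <= 1 + t, so Pi_{i,t} <= t by induction on t: the score
   grows at most linearly and is finite at every time. *)

Lemma convex_comb3_in01 {R : realFieldType} (w1 w2 a b c : R) :
  0 <= w1 -> 0 <= w2 -> w1 + w2 <= 1 ->
  0 <= a <= 1 -> 0 <= b <= 1 -> 0 <= c <= 1 ->
  0 <= w1 * a + w2 * b + (1 - w1 - w2) * c <= 1.
Proof.
move=> w10 w20 w12 /andP[a0 a1] /andP[b0 b1] /andP[c0 c1].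
have w0 : 0 <= 1 - w1 - w2 by lra.
have ha : w1 * a <= w1 by rewrite ler_piMr.
have hb : w2 * b <= w2 by rewrite ler_piMr.
have hc : (1 - w1 - w2) * c <= 1 - w1 - w2 by rewrite ler_piMr.
have := mulr_ge0 w10 a0; have := mulr_ge0 w20 b0; have := mulr_ge0 w0 c0.
by move=> *; apply/andP; split; lra.
Qed.

Lemma bool_divn_in01 {R : realFieldType} (b : bool) (U : nat) :
  (0 < U)%N -> 0 <= (b%:R : R) / U%:R <= 1.
Proof.
move=> U0; have U0R : (0 : R) < U%:R by rewrite ltr0n.
rewrite divr_ge0 ?ler0n //= ler_pdivrMr // mul1r ler_nat.
by case: b.
Qed.

Lemma sum_selected_le {R : realFieldType} {I : finType} (P : pred I)
    (b : I -> bool) (x : I -> R) (c : R) :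
  0 <= c -> (forall j, P j -> x j <= c) ->
  \sum_(j | P j) (b j)%:R * x j <= (\sum_j (b j : nat))%:R * c.
Proof.
move=> c0 xc; rewrite natr_sum mulr_suml.
apply: (@le_trans _ _ (\sum_(j | P j) (b j)%:R * c)).
  by apply: ler_sum => j Pj; rewrite ler_wpM2l ?ler0n ?xc.
rewrite [leRHS](bigID P) /= lerDl.
by apply: sumr_ge0 => j _; rewrite mulr_ge0 ?ler0n.
Qed.

Section ScoreBound.

Variables (R : realFieldType) (M U : nat) (w1 w2 : R).
Variables (phi : 'I_M -> 'I_M -> nat -> bool) (Sbar Lbar : 'I_M -> 'I_M -> nat -> R).
Hypothesis hU : (1 <= U)%N.
Hypotheses (hw1 : 0 <= w1 <= 1) (hw2 : 0 <= w2 <= 1) (hw : w1 + w2 <= 1).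
Hypothesis hdeg : forall i t, (0 < t)%N -> (\sum_(j < M) (phi i j t : nat) <= U)%N.
Hypothesis hS : forall i j t, (0 < t)%N -> 0 <= Sbar i j t <= 1.
Hypothesis hL : forall i j t, (0 < t)%N -> 0 < Lbar i j t <= 1.

Lemma Aterm_in01 i j t : (0 < t)%N ->
  0 <= Aterm U w1 w2 phi Sbar Lbar i j t <= 1.
Proof.
move=> t0; have /andP[l0 l1] := hL i j t t0.
apply: convex_comb3_in01; rewrite ?hS ?bool_divn_in01 //.
- by case/andP: hw1.
- by case/andP: hw2.
- by rewrite subr_ge0 l1 lerBlDr lerDl ltW.
Qed.

Lemma Pi_in0n t i : 0 <= Pi U w1 w2 phi Sbar Lbar t i <= t%:R.
Proof.
elim: t i => [|t IH] i /=; first by rewrite lexx.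
have U0 : (0 : R) < U%:R by rewrite ltr0n.
have term_in0n j : 0 <= Aterm U w1 w2 phi Sbar Lbar i j t.+1
                          + Pi U w1 w2 phi Sbar Lbar t j <= t.+1%:R.
  have /andP[a0 a1] := @Aterm_in01 i j t.+1 isT.
  have /andP[p0 p1] := IH j.
  rewrite -natr1; apply/andP; split; lra.
apply/andP; split.
  rewrite mulr_ge0 ?invr_ge0 ?ler0n // sumr_ge0 // => j _.
  by rewrite mulr_ge0 ?ler0n //; case/andP: (term_in0n j).
rewrite ler_pdivrMl //.
have term_le j : j != i -> _ <= t.+1%:R := fun _ => proj2 (andP (term_in0n j)).
apply: le_trans (sum_selected_le _ _ _ _ (ler0n R t.+1) term_le) _.
by rewrite ler_wpM2r ?ler0n // ler_nat hdeg.
Qed.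

End ScoreBound.

(* The symmetry hypothesis [hsym] is part of the model but not needed for the bound. *)
Theorem lemma2 (R : realFieldType) (M U : nat) (w1 w2 : R)
    (phi : 'I_M -> 'I_M -> nat -> bool) (Sbar Lbar : 'I_M -> 'I_M -> nat -> R)
    (hU : (1 <= U)%N)
    (hw1 : 0 <= w1 <= 1) (hw2 : 0 <= w2 <= 1) (hw : w1 + w2 <= 1)
    (hsym : forall i j t, (0 < t)%N -> phi i j t = phi j i t)
    (hdeg : forall i t, (0 < t)%N -> (\sum_(j < M) (phi i j t : nat) <= U)%N)
    (hS : forall i j t, (0 < t)%N -> 0 <= Sbar i j t <= 1)
    (hL : forall i j t, (0 < t)%N -> 0 < Lbar i j t <= 1) :
  forall (t : nat) (i : 'I_M),
    0 <= Pi U w1 w2 phi Sbar Lbar t i <= t%:R.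
Proof. by move=> t i; exact: Pi_in0n. Qed.
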